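(* Assume Assumption (A1) below holds for the chosen bridge extension. Then: (i) For all $0\le s<t\le 1$, every $\ell\in\{1,\dots,L\}$ and every $\mathbf x_t\in\mathsf X$ with $p_t(\mathbf x_t)>0$, $$p^\ell_{s|t}(\cdot\mid \mathbf x_t)=q^\ell_{s|0,t}\big(\cdot\mid \hat{\mathbf x}^{\mathrm{loo}}_0(\mathbf x_t,t)^\ell,\ \mathbf x_t^\ell\big).$$ (ii) Consequently, for every time grid, the predictor $d^\star(\mathbf x,t):=\hat{\mathbf x}^{\mathrm{loo}}_0(\mathbf x,t)$ minimizes $J$: $J(d^\star)\le J(d)$ for every predictor $d$. (iii) (Uniqueness for UDM.) Consider the uniform case $\pi^\ell=\mathbf 1/K$ with the canonical extension given below. Assume $\alpha$ is strictly decreasing with $\alpha_0=1$ and $\alpha_t\in(0,1)$ for $t\in(0,1]$. Let $0<s<t\le 1$ and let $e_k\in\mathsf V$. Then the map $\nu\mapsto q^\ell_{s|0,t}(\cdot\mid\nu,e_k)$ is injective on $\Delta_K$. In particular, if $\nu\in\Delta_K$ satisfies $q^\ell_{s|0,t}(\cdot\mid \nu,\mathbf x_t^\ell)=p^\ell_{s|t}(\cdot\mid\mathbf x_t)$, then $\nu=\hat{\mathbf x}^{\mathrm{loo}}_0(\mathbf x_t,t)^\ell$. Hence the minimizer in (ii) is unique (at every $\mathbf x_t$ and for every term with $s_i>0$).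
   Context: **Setup.** - Let $K\ge2$, $L\ge1$ and $\mathsf V=\{1,\dots,K\}$. Tokens are identified with the standard basis vectors $e_1,\dots,e_K$ of $\mathbb R^K$. - $\Delta_K$ is the probability simplex in $\mathbb R^K$, and $\mathbf 1$ is the all-ones vector. For $\pi\in\Delta_K$ and a token $x$, $\mathrm{Cat}(x;\pi):=\langle x,\pi\rangle$. - $\mathsf X=\mathsf V^L$. For $\mathbf x\in\mathsf X$, $\mathbf x^\ell$ denotes its $\ell$-th token and $\mathbf x^{-\ell}\in\mathsf V^{L-1}$ denotes the remaining tokens. - $p_0$ is a probability distribution on $\mathsf X$. - The noise schedule $\alpha:[0,1]\to[0,1]$ is nonincreasing with $\alpha_0=1$, and $\alpha_{t|s}:=\alpha_t/\alpha_s$. - For each position $\ell$ fix $\pi^\ell\in\Delta_K$. The forward token kernels are $q^\ell_{t|s}(x_t\mid x_s)=\mathrm{Cat}(x_t;\alpha_{t|s}x_s+(1-\alpha_{t|s})\pi^\ell)$ for $0\le s<t\le1$, and $q_{t|s}(\mathbf x_t\mid\mathbf x_s)=\prod_\ell q^\ell_{t|s}(\mathbf x_t^\ell\mid\mathbf x_s^\ell)$. - The same formula $q^\ell_{t|0}(x\mid\nu)=\langle x,\alpha_t\nu+(1-\alpha_t)\pi^\ell\rangle$ is used for $\nu\in\Delta_K$. - $(X_t)_{t\in[0,1]}$ is the Markov process with $X_0\sim p_0$ and these transitions. $p_t$ is the law of $X_t$, and $p_t(\mathbf x^{-\ell})$ denotes the marginal of $X_t^{-\ell}$. - ''UDM''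 means $\pi^\ell=\mathbf 1/K$ for all $\ell$. **Posteriors.** - Denoiser: $p^\ell_{0|t}(x\mid\mathbf x_t):=\mathbb P(X_0^\ell=x\mid X_t=\mathbf x_t)$. - Leave-one-out (LOO) posterior: $p^{\mathrm{loo},\ell}_{0|t}(x\mid\mathbf x_t^{-\ell}):=\mathbb P(X_0^\ell=x\mid X_t^{-\ell}=\mathbf x_t^{-\ell})$. Equivalently it is proportional to $\sum_{\mathbf x_0^{-\ell}}p_0(\mathbf x_0)\prod_{j\ne\ell}q^j_{t|0}(\mathbf x_t^j\mid\mathbf x_0^j)$ with $\mathbf x_0^\ell=x$. - Its mean vector is $\hat{\mathbf x}^{\mathrm{loo}}_0(\mathbf x_t,t)^\ell:=\sum_x p^{\mathrm{loo},\ell}_{0|t}(x\mid\mathbf x_t^{-\ell})\,x\in\Delta_K$. - Reverse token marginal: $p^\ell_{s|t}(x\mid\mathbf x_t):=\mathbb P(X^\ell_s=x\mid X_t=\mathbf x_t)$. **Bridge extension.** - For $0\le s<t$, a bridge extension is a map $(\nu,x_t)\mapsto q^\ell_{s|0,t}(\cdot\mid\nu,x_t)\in\Delta_K$ defined for $\nu\in\Delta_K$ and $x_t\in\mathsf V$. - For one-hot $\nu=x_0$ with $q^\ell_{t|0}(x_t\mid x_0)>0$ it equals $q^\ell_{t|s}(x_t\mid x_s)q^\ell_{s|0}(x_s\mid x_0)/q^\ell_{t|0}(x_t\mid x_0)$. - Assumption (A1): for all $x_s,x_t\in\mathsf V$ and all $\nu\in\Delta_K$ with $q^\ell_{t|0}(x_t\mid\nu)>0$,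 $$q^\ell_{s|0,t}(x_s\mid\nu,x_t)=\frac{q^\ell_{t|s}(x_t\mid x_s)\,q^\ell_{s|0}(x_s\mid\nu)}{q^\ell_{t|0}(x_t\mid\nu)}.$$ - In the UDM case the canonical extension is: for $x_t=e_k$, $$q^\ell_{s|0,t}(\cdot\mid\nu,e_k)=\mathrm{Cat}\Big(\cdot;\ \frac{K\alpha_t\nu_k e_k+(\alpha_{t|s}-\alpha_t)e_k+(\alpha_s-\alpha_t)\nu+D_{s,t}\mathbf 1/K}{K\alpha_t\nu_k+1-\alpha_t}\Big),$$ with $\nu_k=\langle e_k,\nu\rangle$ and $D_{s,t}=(1-\alpha_{t|s})(1-\alpha_s)$. This extension satisfies (A1). **Objective.** - Fix a grid $0=t_0<t_1<\dots<t_n=1$ and set $s_i=t_{i-1}$. - A predictor is a function $d:\mathsf X\times[0,1]\to\Delta_K^L$. - The objective is $$J(d):=\sum_{i=1}^n\sum_{\ell=1}^L\mathbb E\Big[\mathrm{KL}\Big(p^\ell_{s_i|t_i}(\cdot\mid X_{t_i})\ \Big\|\ q^\ell_{s_i|0,t_i}\big(\cdot\mid d(X_{t_i},t_i)^\ell,X^\ell_{t_i}\big)\Big)\Big].$$ *)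

From HB Require Import structures.
From mathcomp Require Import all_boot all_order all_algebra.
From mathcomp Require Import all_classical all_reals all_analysis.
Set Implicit Arguments. Unset Strict Implicit. Unset Printing Implicit Defensive.
Import Order.TTheory GRing.Theory Num.Theory.
Local Open Scope ring_scope.

Section Defs.
Variable R : realType.

(* sequences x in X = V^L, with V = 'I_K (token k <-> basis vector e_k) *)
Definition seqX (K L : nat) := {ffun 'I_L -> 'I_K}.

Definition simplex (K : nat) (nu : 'I_K -> R) : Prop :=
  (forall k, 0 <= nu k) /\ \sum_(k < K) nu k = 1.

Definition is_pmf (T : finType) (p : T -> R) : Prop :=
  (forall x, 0 <= p x) /\ \sum_(x : T) p x = 1.

Definition schedule (alpha : R -> R) : Prop :=
  alpha 0 = 1 /\
  (forall t, 0 <= t -> t <= 1 -> 0 <= alpha t <= 1) /\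
  (forall s t, 0 <= s -> s <= t -> t <= 1 -> alpha t <= alpha s).

Definition onehot (K : nat) (k : 'I_K) : 'I_K -> R := fun j => (j == k)%:R.

(* Cat(x ; a nu + (1-a) pi) *)
Definition qcat (K : nat) (pil : 'I_K -> R) (a : R) (nu : 'I_K -> R) (x : 'I_K) : R :=
  a * nu x + (1 - a) * pil x.

Definition qseq (K L : nat) (alpha : R -> R) (pi : 'I_L -> 'I_K -> R)
  (s t : R) (x y : seqX K L) : R :=
  \prod_(l < L) qcat (pi l) (alpha t / alpha s) (onehot (x l)) (y l).

Definition marg (K L : nat) (p0 : seqX K L -> R) (alpha : R -> R)
  (pi : 'I_L -> 'I_K -> R) (t : R) (x : seqX K L) : R :=
  \sum_(x0 : seqX K L) p0 x0 * qseq alpha pi 0 t x0 x.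

(* P(X_s = xs, X_t = xt), from the Markov chain X_0 -> X_s -> X_t *)
Definition joint (K L : nat) (p0 : seqX K L -> R) (alpha : R -> R)
  (pi : 'I_L -> 'I_K -> R) (s t : R) (xs xt : seqX K L) : R :=
  \sum_(x0 : seqX K L) p0 x0 * qseq alpha pi 0 s x0 xs * qseq alpha pi s t xs xt.

(* reverse token marginal p^l_{s|t}(x | xt) = P(X_s^l = x | X_t = xt) *)
Definition rev_tok (K L : nat) (p0 : seqX K L -> R) (alpha : R -> R)
  (pi : 'I_L -> 'I_K -> R) (s t : R) (l : 'I_L) (xt : seqX K L) (x : 'I_K) : R :=
  (\sum_(xs : seqX K L | xs l == x) joint p0 alpha pi s t xs xt)
  / marg p0 alpha pi t xt.

Definition agree_off (K L : nat) (l : 'I_L) (xt y : seqX K L) : bool :=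
  [forall j : 'I_L, (j != l) ==> (y j == xt j)].

(* LOO posterior P(X_0^l = x | X_t^{-l} = xt^{-l}) *)
Definition loo (K L : nat) (p0 : seqX K L -> R) (alpha : R -> R)
  (pi : 'I_L -> 'I_K -> R) (t : R) (l : 'I_L) (xt : seqX K L) (x : 'I_K) : R :=
  (\sum_(x0 : seqX K L | x0 l == x) \sum_(y : seqX K L | agree_off l xt y)
      p0 x0 * qseq alpha pi 0 t x0 y)
  / (\sum_(x0 : seqX K L) \sum_(y : seqX K L | agree_off l xt y)
      p0 x0 * qseq alpha pi 0 t x0 y).

(* mean vector  xhat^loo_0(xt, t)^l = sum_x loo(x) e_x  (k-th coordinate) *)
Definition xhat (K L : nat) (p0 : seqX K L -> R) (alpha : R -> R)
  (pi : 'I_L -> 'I_K -> R) (xt : seqX K L) (t : R) (l : 'I_L) : 'I_K -> R :=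
  fun k => loo p0 alpha pi t l xt k.

(* a bridge extension: bridge l s t nu xt is a vector in R^K (indexed by x_s) *)
Definition bridge_type (K L : nat) :=
  'I_L -> R -> R -> ('I_K -> R) -> 'I_K -> 'I_K -> R.

Definition bridge_simplex (K L : nat) (br : bridge_type K L) : Prop :=
  forall l s t nu xt, 0 <= s -> s < t -> t <= 1 -> simplex nu ->
    simplex (br l s t nu xt).

Definition A1 (K L : nat) (alpha : R -> R) (pi : 'I_L -> 'I_K -> R)
  (br : bridge_type K L) : Prop :=
  forall l s t, 0 <= s -> s < t -> t <= 1 ->
  forall (xs xt : 'I_K) (nu : 'I_K -> R), simplex nu ->
    0 < qcat (pi l) (alpha t) nu xt ->
    br l s t nu xt xs =
      qcat (pi l) (alpha t / alpha s) (onehot xs) xt * qcat (pi l) (alpha s) nu xs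
      / qcat (pi l) (alpha t) nu xt.

Definition udm_bridge (K L : nat) (alpha : R -> R) : bridge_type K L :=
  fun l s t nu xt xs =>
    let ats := alpha t / alpha s in
    let D := (1 - ats) * (1 - alpha s) in
    (K%:R * alpha t * nu xt * (xs == xt)%:R + (ats - alpha t) * (xs == xt)%:R
      + (alpha s - alpha t) * nu xs + D / K%:R)
    / (K%:R * alpha t * nu xt + 1 - alpha t).

Definition KL (K : nat) (p q : 'I_K -> R) : \bar R :=
  (\sum_(x < K) (if p x == 0%R then 0%E
                 else if q x == 0%R then +oo%E
                 else (p x * ln (p x / q x))%:E))%E.

Definition grid (n : nat) (tg : nat -> R) : Prop :=
  tg 0%N = 0 /\ tg n = 1 /\ (forall i, (i < n)%N -> tg i < tg i.+1).

Definition predictor (K L : nat) (d : seqX K L -> R -> 'I_L -> 'I_K -> R) : Prop :=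
  forall x t l, 0 <= t -> t <= 1 -> simplex (d x t l).

(* objective J(d), with s_i = t_{i-1} *)
Definition Jobj (K L : nat) (p0 : seqX K L -> R) (alpha : R -> R)
  (pi : 'I_L -> 'I_K -> R) (br : bridge_type K L) (n : nat) (tg : nat -> R)
  (d : seqX K L -> R -> 'I_L -> 'I_K -> R) : \bar R :=
  (\sum_(1 <= i < n.+1) \sum_(l < L) \sum_(x : seqX K L)
     ((marg p0 alpha pi (tg i) x)%:E *
      KL (rev_tok p0 alpha pi (tg i.-1) (tg i) l x)
         (br l (tg i.-1) (tg i) (d x (tg i) l) (x l))))%E.

End Defs.

From HB Require Import structures.
From mathcomp Require Import all_boot all_order all_algebra.
From mathcomp Require Import all_classical all_reals all_analysis.
From mathcomp Require Import ring lra.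
Import Order.TTheory GRing.Theory Num.Theory.
Set Implicit Arguments. Unset Strict Implicit. Unset Printing Implicit Defensive.
Local Open Scope ring_scope.

(* The reverse token marginal [P(X_s^l = . | X_t = xt)] is computed by summing the
   path law over every token but the l-th.  The other tokens of [xt] then only enter
   through the leave-one-out posterior [xhat] of [X_0^l], and Bayes' rule together with
   Chapman-Kolmogorov for the one-token kernels turns the marginal into the one-token
   bridge started from [xhat], which is (A1).  Every summand of [J] is a weighted KL
   divergence, hence nonnegative, and it vanishes at [xhat]: so [xhat] minimises [J].
   In the uniform case the canonical bridge into [e_k] is, in the coordinate [k], a
   Moebius map of [nu_k] with positive determinant and, in the other coordinates, affine
   in [nu_x] with a nonzero slope; it is therefore injective in [nu], and any predictor
   with [J(d) <= J(xhat) = 0] annihilates each KL term and so coincides with [xhat]. *)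

Section Simplex.
Variables (R : realType) (K : nat).
Implicit Types (pi nu p q : 'I_K -> R) (x k : 'I_K).

Lemma sum_onehot x (f : 'I_K -> R) : \sum_k onehot R x k * f k = f x.
Proof.
rewrite (bigD1 x) //= big1 => [|k /negbTE hk]; rewrite /onehot ?hk ?eqxx.
  by rewrite mul1r addr0.
by rewrite mul0r.
Qed.

Lemma simplex_onehot x : simplex (onehot R x).
Proof.
split; first by move=> k; rewrite /onehot ler0n.
by rewrite -[RHS](sum_onehot x (fun _ => 1)); apply: eq_bigr => k _; rewrite mulr1.
Qed.

Lemma simplex_le1 nu x : simplex nu -> nu x <= 1.
Proof. by move=> [hn <-]; rewrite (bigD1 x) //= lerDl sumr_ge0. Qed.

Lemma eq_simplex p q : p =1 q -> simplex q -> simplex p.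
Proof.
move=> h [h1 h2]; split; first by move=> x; rewrite h.
by rewrite -h2; apply: eq_bigr => x _; rewrite h.
Qed.

Lemma qcat_ge0 pi nu c x :
  simplex pi -> simplex nu -> 0 <= c <= 1 -> 0 <= qcat pi c nu x.
Proof.
move=> [hp _] [hn _] /andP[c0 c1].
by rewrite /qcat addr_ge0 // mulr_ge0 // subr_ge0.
Qed.

Lemma sum_qcat pi nu c : simplex pi -> simplex nu -> \sum_k qcat pi c nu k = 1.
Proof. by move=> [_ hp] [_ hn]; rewrite /qcat big_split /= -!mulr_sumr hp hn; ring. Qed.

(* Chapman-Kolmogorov: mixing towards [pi] with weight [b], then [r], is one mixing with [b * r]. *)
Lemma sum_qcat_comp pi nu r b k : simplex pi -> simplex nu ->
  \sum_x qcat pi r (onehot R x) k * qcat pi b nu x = qcat pi (b * r) nu k.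
Proof.
move=> [_ hp] [_ hn]; rewrite /qcat.
under eq_bigr => x _ do rewrite mulrDl.
rewrite big_split /=.
have -> : \sum_x r * onehot R x k * (b * nu x + (1 - b) * pi x)
          = r * (b * nu k + (1 - b) * pi k).
  rewrite -[RHS](sum_onehot k (fun x => r * (b * nu x + (1 - b) * pi x))).
  by apply: eq_bigr => x _; rewrite /onehot eq_sym; ring.
by rewrite -mulr_sumr big_split /= -!mulr_sumr hn hp; ring.
Qed.

(* The right-hand side of (A1): the law of [X_s] given [X_0 ~ nu] and [X_t = k]. *)
Definition bayes_bridge pi (a b : R) nu k x : R :=
  qcat pi (a / b) (onehot R x) k * qcat pi b nu x / qcat pi a nu k.

Lemma simplex_bayes_bridge pi nu a b k :
  simplex pi -> simplex nu -> 0 <= b <= 1 -> 0 <= a / b <= 1 -> b * (a / b) = a ->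
  0 < qcat pi a nu k -> simplex (bayes_bridge pi a b nu k).
Proof.
move=> hp hn hb hr hab hq; split.
  move=> x; apply: divr_ge0; last exact: ltW.
  by apply: mulr_ge0; apply: qcat_ge0 => //; exact: simplex_onehot.
by rewrite /bayes_bridge -mulr_suml sum_qcat_comp // hab divff // gt_eqF.
Qed.

End Simplex.

Section KullbackLeibler.
Variables (R : realType) (K : nat).
Implicit Types p q : 'I_K -> R.

(* Both inequalities are [1 + y <= expR y] at [y = ln (b / a)], strict for [y != 0]. *)
Lemma sub_le_mul_ln_div (a b : R) : 0 < a -> 0 < b ->
  a - b <= a * ln (a / b) /\ (a != b -> a - b < a * ln (a / b)).
Proof.
move=> ha hb; set z := b / a.
have zpos : z \in Num.pos by rewrite posrE divr_gt0.
have e1 : ln (a / b) = - ln z by rewrite -lnV // /z invf_div.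
have e2 : a - b = a * (1 - z) by rewrite /z; field; rewrite gt_eqF.
have hge := expR_ge1Dx (ln z); rewrite lnK // in hge.
rewrite e1 e2; split; first by apply: ler_wpM2l; [exact: ltW | lra].
move=> hab; rewrite ltr_pM2l //.
have hz : ln z != 0.
  apply: contra hab => /eqP hz0.
  have z1 : z = 1 by rewrite -(lnK zpos) hz0 expR0.
  by rewrite -[b](divfK (lt0r_neq0 ha)) -/z z1 mul1r.
have hgt := expR_gt1Dx hz; rewrite lnK // in hgt; lra.
Qed.

Definition KL_term p q x : \bar R :=
  if p x == 0 then 0%E else if q x == 0 then +oo%E else (p x * ln (p x / q x))%:E.

Lemma KLE p q : KL p q = (\sum_x KL_term p q x)%E.
Proof. by []. Qed.

Lemma KL_term_ge p q x : simplex p -> simplex q -> ((p x - q x)%:E <= KL_term p q x)%E.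
Proof.
move=> [hp _] [hq _]; rewrite /KL_term.
case: eqP => [->|/eqP p0]; first by rewrite lee_fin sub0r oppr_le0.
case: eqP => [_|/eqP q0]; first exact: leey.
by rewrite lee_fin; apply: (sub_le_mul_ln_div _ _).1; rewrite lt_def ?p0 ?q0 ?hp ?hq.
Qed.

Lemma KL_term_gt p q x : simplex p -> simplex q -> p x != q x ->
  ((p x - q x)%:E < KL_term p q x)%E.
Proof.
move=> [hp _] [hq _] hpq; rewrite /KL_term.
case: eqP => [e|/eqP p0].
  by rewrite lte_fin e sub0r oppr_lt0 lt_def hq andbT eq_sym -e.
case: eqP => [_|/eqP q0]; first by rewrite ltey.
by rewrite lte_fin; apply: (sub_le_mul_ln_div _ _).2; rewrite ?lt_def ?p0 ?q0 ?hp ?hq.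
Qed.

Lemma KL_ge0 p q : simplex p -> simplex q -> (0 <= KL p q)%E.
Proof.
move=> hp hq; rewrite KLE; apply: (@le_trans _ _ (\sum_x (p x - q x)%:E)%E).
  by rewrite sumEFin lee_fin sumrB hp.2 hq.2 subrr.
by apply: lee_sum => x _; exact: KL_term_ge.
Qed.

Lemma KL_le0_eq p q : simplex p -> simplex q -> (KL p q <= 0)%E -> p =1 q.
Proof.
move=> hp hq hKL x; apply/eqP/negP => /negP hx.
move: hKL; apply/negP; rewrite -ltNge KLE.
suff : (\sum_y (p y - q y)%:E < \sum_y KL_term p q y)%E.
  by rewrite sumEFin sumrB hp.2 hq.2 subrr.
rewrite (bigD1 x) //= [X in (_ < X)%E](bigD1 x) //=.
apply: lte_leD; first by rewrite sumEFin.
  exact: KL_term_gt.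
by apply: lee_sum => y _; exact: KL_term_ge.
Qed.

Lemma KLxx p : KL p p = 0%E.
Proof.
rewrite KLE big1 // => x _; rewrite /KL_term; case: eqP => // /eqP h.
by rewrite divff // ln1 mulr0.
Qed.

Lemma eq_KL p p' q q' : p =1 p' -> q =1 q' -> KL p q = KL p' q'.
Proof. by move=> hp hq; apply: eq_bigr => x _; rewrite hp hq. Qed.

End KullbackLeibler.

Lemma lee_sum_term (R : realType) (I : eqType) (s : seq I) (F : I -> \bar R) j :
  uniq s -> (forall i, i \in s -> (0 <= F i)%E) -> j \in s ->
  (F j <= \sum_(i <- s) F i)%E.
Proof.
move=> us hF js; rewrite (bigD1_seq j) //= leeDl // big_seq_cond.
by apply: sume_ge0 => i /andP[/hF].
Qed.

Lemma sum_ffun_prod (R : realType) K L (P : 'I_L -> 'I_K -> bool)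
    (F : 'I_L -> 'I_K -> R) :
  \sum_(x : seqX K L | [forall j, P j (x j)]) \prod_j F j (x j)
  = \prod_j \sum_(k | P j k) F j k.
Proof.
under [RHS]eq_bigr => j _ do rewrite big_mkcond /=.
rewrite bigA_distr_bigA /= big_mkcond /=; apply: eq_bigr => x _.
case: (boolP [forall j, P j (x j)]) => [h|/forallPn[j hj]].
  by apply: eq_bigr => j _; rewrite (forallP h j).
by rewrite (bigD1 j) //= (negbTE hj) mul0r.
Qed.

Lemma sum_qcat_onehot (R : realType) K L (pi : 'I_K -> R) c (l : 'I_L) y
    (F : seqX K L -> R) :
  \sum_(x0 : seqX K L) F x0 * qcat pi c (onehot R (x0 l)) y
  = c * \sum_(x0 : seqX K L | x0 l == y) F x0 + (1 - c) * pi y * \sum_x0 F x0.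
Proof.
rewrite /qcat; under eq_bigr => x0 _ do rewrite mulrDr.
rewrite big_split /=; congr (_ + _).
  rewrite mulr_sumr [RHS]big_mkcond /=; apply: eq_bigr => x0 _.
  by rewrite /onehot [y == _]eq_sym; case: (x0 l == y) => /=; ring.
by rewrite big_distrr /=; apply: eq_bigr => x0 _; rewrite mulrC.
Qed.

Lemma grid_step (R : realType) n (tg : nat -> R) : grid n tg ->
  forall i, (1 <= i <= n)%N -> [/\ 0 <= tg i.-1, tg i.-1 < tg i & tg i <= 1].
Proof.
move=> [g0 [g1 ginc]].
have mono i j : (i <= j <= n)%N -> tg i <= tg j.
  case/andP; elim: j => [|j IH] hij hjn; first by move: hij; rewrite leqn0 => /eqP ->.
  case: (ltngtP i j.+1) hij => // [hij _|-> _]; last exact: lexx.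
  exact: le_trans (IH hij (ltnW hjn)) (ltW (ginc j hjn)).
move=> i /andP[i1 ni]; have ei : i.-1.+1 = i by rewrite prednK.
split; first by rewrite -g0 mono // leq0n (leq_trans (leq_pred i)).
  by rewrite -{2}ei ginc // -ltnS ei.
by rewrite -g1 mono // ni leqnn.
Qed.

(* If [alpha s = 0] then also [alpha t = 0], and the ratio is the junk value [0 / 0 = 0]. *)
Lemma schedule_ratio (R : realType) (alpha : R -> R) s t : schedule alpha ->
  0 <= s -> s <= t -> t <= 1 ->
  0 <= alpha t / alpha s <= 1 /\ alpha s * (alpha t / alpha s) = alpha t.
Proof.
move=> [_ [hrng hmono]] s0 st t1.
have /andP[ht0 _] := hrng t (le_trans s0 st) t1.
have hts := hmono s t s0 st t1.
have [hs|hs] := eqVneq (alpha s) 0.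
  rewrite hs invr0 mulr0 mul0r lexx ler01; split=> //.
  by apply/eqP; rewrite eq_sym eq_le ht0 -hs hts.
have hs0 : 0 < alpha s by rewrite lt_def hs (le_trans ht0 hts).
by rewrite divr_ge0 ?(ltW hs0) //= ler_pdivrMr // mul1r mulrCA divff // mulr1.
Qed.

Section ReverseProcess.
Variables (R : realType) (K L : nat) (p0 : seqX K L -> R) (alpha : R -> R)
  (pi : 'I_L -> 'I_K -> R).
Hypotheses (hp0 : is_pmf p0) (halpha : schedule alpha) (hpi : forall l, simplex (pi l)).

(* [marg_off t l xt] is [P(X_t^-l = xt^-l)]; [loo_mass t l xt] splits it according to [X_0^l]. *)
Definition lik_off t l (xt x0 : seqX K L) : R :=
  \prod_(j | j != l) qcat (pi j) (alpha t) (onehot R (x0 j)) (xt j).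

Definition loo_mass t l xt (x : 'I_K) : R :=
  \sum_(x0 : seqX K L | x0 l == x) p0 x0 * lik_off t l xt x0.

Definition marg_off t l xt : R := \sum_(x0 : seqX K L) p0 x0 * lik_off t l xt x0.

Lemma sum_loo_mass t l xt : \sum_x loo_mass t l xt x = marg_off t l xt.
Proof. by rewrite /marg_off (partition_big (fun x0 : seqX K L => x0 l) predT). Qed.

Lemma lik_off_ge0 t l xt x0 : 0 <= alpha t <= 1 -> 0 <= lik_off t l xt x0.
Proof. by move=> ht; apply: prodr_ge0 => j _; apply: qcat_ge0 => //; exact: simplex_onehot. Qed.

Lemma loo_mass_ge0 t l xt x : 0 <= alpha t <= 1 -> 0 <= loo_mass t l xt x.
Proof. by move=> ht; apply: sumr_ge0 => x0 _; rewrite mulr_ge0 ?lik_off_ge0 ?hp0.1. Qed.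

Lemma loo_mass_le_marg_off t l xt x : 0 <= alpha t <= 1 ->
  loo_mass t l xt x <= marg_off t l xt.
Proof.
move=> ht; rewrite /marg_off (bigID (fun x0 : seqX K L => x0 l == x)) /= lerDl.
by apply: sumr_ge0 => x0 _; rewrite mulr_ge0 ?lik_off_ge0 ?hp0.1.
Qed.

Lemma marg_decomp t l xt : marg p0 alpha pi t xt =
  alpha t * loo_mass t l xt (xt l) + (1 - alpha t) * pi l (xt l) * marg_off t l xt.
Proof.
rewrite /marg /loo_mass /marg_off -sum_qcat_onehot; apply: eq_bigr => x0 _.
by rewrite /qseq halpha.1 divr1 (bigD1 l) //= /lik_off -mulrA [X in _ * X]mulrC.
Qed.

Lemma marg_ge0 t x : 0 <= t -> t <= 1 -> 0 <= marg p0 alpha pi t x.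
Proof.
move=> t0 t1; apply: sumr_ge0 => x0 _; rewrite mulr_ge0 ?hp0.1 //.
apply: prodr_ge0 => j _; apply: qcat_ge0 => //; first exact: simplex_onehot.
by rewrite halpha.1 divr1; apply: halpha.2.1.
Qed.

Lemma marg_le_marg_off t l xt : 0 <= alpha t <= 1 ->
  marg p0 alpha pi t xt <= marg_off t l xt.
Proof.
move=> ht; have /andP[ht0 ht1] := ht; rewrite (marg_decomp _ l).
have hN := loo_mass_ge0 l xt (xt l) ht.
have hNW := loo_mass_le_marg_off l xt (xt l) ht.
have hpil := simplex_le1 (xt l) (hpi l).
have : alpha t * loo_mass t l xt (xt l) <= alpha t * marg_off t l xt by rewrite ler_wpM2l.
have : pi l (xt l) * marg_off t l xt <= marg_off t l xt.
  by rewrite ler_piMl // (le_trans hN hNW).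
have : 0 <= 1 - alpha t by rewrite subr_ge0.
nra.
Qed.

Lemma marg_off_gt0 t l xt : 0 <= t -> t <= 1 -> 0 < marg p0 alpha pi t xt ->
  0 < marg_off t l xt.
Proof.
move=> t0 t1 hm; apply: lt_le_trans hm _.
by apply: marg_le_marg_off; apply: halpha.2.1.
Qed.

Lemma sum_agree_off_qseq t l xt x0 :
  \sum_(y : seqX K L | agree_off l xt y) qseq alpha pi 0 t x0 y = lik_off t l xt x0.
Proof.
rewrite /qseq halpha.1 divr1 /agree_off.
rewrite (sum_ffun_prod (fun j k => (j != l) ==> (k == xt j))
   (fun j k => qcat (pi j) (alpha t) (onehot R (x0 j)) k)).
rewrite (bigD1 l) //= eqxx /= (sum_qcat _ (hpi l) (simplex_onehot _ _)) mul1r.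
apply: eq_bigr => j hj; rewrite hj /=.
by rewrite (big_pred1_eq _ (xt j) (fun k => qcat (pi j) (alpha t) (onehot R (x0 j)) k)).
Qed.

Lemma xhatE xt t l k : xhat p0 alpha pi xt t l k = loo_mass t l xt k / marg_off t l xt.
Proof.
by rewrite /xhat /loo; congr (_ / _); apply: eq_bigr => x0 _;
  rewrite -mulr_sumr sum_agree_off_qseq.
Qed.

Lemma simplex_xhat t l xt : 0 <= t -> t <= 1 -> 0 < marg p0 alpha pi t xt ->
  simplex (xhat p0 alpha pi xt t l).
Proof.
move=> t0 t1 hm; have hW := marg_off_gt0 l t0 t1 hm.
split=> [k|].
  by rewrite xhatE; apply: divr_ge0 (ltW hW); apply: loo_mass_ge0; apply: halpha.2.1.
by under eq_bigr do rewrite xhatE; rewrite -mulr_suml sum_loo_mass divff ?gt_eqF.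
Qed.

Lemma qcat_xhat t l xt : 0 < marg_off t l xt ->
  qcat (pi l) (alpha t) (xhat p0 alpha pi xt t l) (xt l)
  = marg p0 alpha pi t xt / marg_off t l xt.
Proof. by move=> hW; rewrite (marg_decomp _ l) /qcat xhatE; field; rewrite gt_eqF. Qed.

Lemma sum_qseq_chain s t l xt x x0 : alpha s * (alpha t / alpha s) = alpha t ->
  \sum_(xs : seqX K L | xs l == x) qseq alpha pi 0 s x0 xs * qseq alpha pi s t xs xt
  = lik_off t l xt x0 * qcat (pi l) (alpha s) (onehot R (x0 l)) x
    * qcat (pi l) (alpha t / alpha s) (onehot R x) (xt l).
Proof.
move=> hst; rewrite /qseq halpha.1 divr1.
under eq_bigr do rewrite -big_split /=.
set F := fun j k => qcat (pi j) (alpha s) (onehot R (x0 j)) k *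
                    qcat (pi j) (alpha t / alpha s) (onehot R k) (xt j).
rewrite (eq_bigl (fun xs : seqX K L => [forall j, (j == l) ==> (xs j == x)])).
  rewrite (sum_ffun_prod (fun j k => (j == l) ==> (k == x)) F) (bigD1 l) //= eqxx /=.
  rewrite (big_pred1_eq _ x (F l)) mulrC -mulrA; congr (_ * _).
  apply: eq_bigr => j hj; rewrite (eq_bigl predT) => [|k]; last by rewrite (negbTE hj).
  rewrite /F; under eq_bigr do rewrite mulrC.
  by rewrite sum_qcat_comp ?hst //; exact: simplex_onehot.
move=> xs; apply/idP/forallP => [/eqP h j|h]; last exact: (implyP (h l) (eqxx l)).
by apply/implyP => /eqP ->; rewrite h.
Qed.

Lemma joint_decomp s t l xt x : alpha s * (alpha t / alpha s) = alpha t ->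
  \sum_(xs : seqX K L | xs l == x) joint p0 alpha pi s t xs xt
  = (alpha s * loo_mass t l xt x + (1 - alpha s) * pi l x * marg_off t l xt)
    * qcat (pi l) (alpha t / alpha s) (onehot R x) (xt l).
Proof.
move=> hst; rewrite /joint exchange_big /=.
under eq_bigr do under eq_bigr do rewrite -mulrA.
under eq_bigr do rewrite -mulr_sumr sum_qseq_chain // !mulrA.
rewrite -mulr_suml; congr (_ * _).
rewrite /loo_mass /marg_off -sum_qcat_onehot.
by apply: eq_bigr.
Qed.

Lemma rev_tok_bayes s t l xt : 0 <= s -> s < t -> t <= 1 ->
  0 < marg p0 alpha pi t xt ->
  rev_tok p0 alpha pi s t l xt
  =1 bayes_bridge (pi l) (alpha t) (alpha s) (xhat p0 alpha pi xt t l) (xt l).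
Proof.
move=> s0 st t1 hm x; have t0 := le_trans s0 (ltW st).
have hW := marg_off_gt0 l t0 t1 hm.
have [_ hst] := schedule_ratio halpha s0 (ltW st) t1.
rewrite /rev_tok joint_decomp // /bayes_bridge qcat_xhat //.
(* [Q] is kept opaque to [field], which would otherwise ask for [alpha s != 0] *)
set Q := qcat _ (alpha t / alpha s) _ _.
by rewrite /qcat !xhatE; field; rewrite !gt_eqF.
Qed.

Lemma simplex_rev_tok s t l xt : 0 <= s -> s < t -> t <= 1 ->
  0 < marg p0 alpha pi t xt -> simplex (rev_tok p0 alpha pi s t l xt).
Proof.
move=> s0 st t1 hm; have t0 := le_trans s0 (ltW st).
apply: eq_simplex (rev_tok_bayes l s0 st t1 hm) _.
have [hr hst] := schedule_ratio halpha s0 (ltW st) t1.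
have hW := marg_off_gt0 l t0 t1 hm.
apply: simplex_bayes_bridge hr hst _ => //; first exact: simplex_xhat.
  exact: halpha.2.1 s s0 (le_trans (ltW st) t1).
by rewrite qcat_xhat // divr_gt0.
Qed.

Definition bridge_posterior (br : bridge_type R K L) :=
  forall s t, 0 <= s -> s < t -> t <= 1 ->
  forall l xt, 0 < marg p0 alpha pi t xt ->
    rev_tok p0 alpha pi s t l xt =1 br l s t (xhat p0 alpha pi xt t l) (xt l).

Lemma A1_bridge_posterior br : A1 alpha pi br -> bridge_posterior br.
Proof.
move=> hA1 s t s0 st t1 l xt hm x; have t0 := le_trans s0 (ltW st).
have hW := marg_off_gt0 l t0 t1 hm.
rewrite rev_tok_bayes // hA1 //; first exact: simplex_xhat.
by rewrite qcat_xhat // divr_gt0.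
Qed.

Implicit Types (br : bridge_type R K L) (d : seqX K L -> R -> 'I_L -> 'I_K -> R).

Definition Jterm br d s t l x : \bar R :=
  ((marg p0 alpha pi t x)%:E
   * KL (rev_tok p0 alpha pi s t l x) (br l s t (d x t l) (x l)))%E.

Lemma JobjE br n tg d : Jobj p0 alpha pi br n tg d =
  (\sum_(1 <= i < n.+1) \sum_l \sum_x Jterm br d (tg i.-1) (tg i) l x)%E.
Proof. by []. Qed.

Lemma Jterm_ge0 br d s t l x : bridge_simplex br -> predictor d ->
  0 <= s -> s < t -> t <= 1 -> (0 <= Jterm br d s t l x)%E.
Proof.
move=> hbr hd s0 st t1; have t0 := le_trans s0 (ltW st).
rewrite /Jterm; have := marg_ge0 x t0 t1; rewrite le_eqVlt => /orP[/eqP <-|hm].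
  by rewrite mul0e.
apply: mule_ge0; first by rewrite lee_fin ltW.
apply: KL_ge0; first exact: simplex_rev_tok.
by apply: hbr => //; apply: hd.
Qed.

Lemma Jterm_xhat br s t l x : bridge_posterior br ->
  0 <= s -> s < t -> t <= 1 -> Jterm br (xhat p0 alpha pi) s t l x = 0%E.
Proof.
move=> hpost s0 st t1; have t0 := le_trans s0 (ltW st).
rewrite /Jterm; have := marg_ge0 x t0 t1; rewrite le_eqVlt => /orP[/eqP <-|hm].
  by rewrite mul0e.
by rewrite (eq_KL (hpost _ _ s0 st t1 l x hm) (frefl _)) KLxx mule0.
Qed.

Lemma Jobj_xhat br n tg : grid n tg -> bridge_posterior br ->
  Jobj p0 alpha pi br n tg (xhat p0 alpha pi) = 0%E.
Proof.
move=> hg hpost; rewrite JobjE big_nat big1 // => i hi.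
have [s0 st t1] := grid_step hg hi.
by rewrite big1 // => l _; rewrite big1 // => x _; exact: Jterm_xhat.
Qed.

Lemma Jobj_ge0 br n tg d : grid n tg -> bridge_simplex br -> predictor d ->
  (0 <= Jobj p0 alpha pi br n tg d)%E.
Proof.
move=> hg hbr hd; rewrite JobjE big_nat; apply: sume_ge0 => i hi.
have [s0 st t1] := grid_step hg hi.
by apply: sume_ge0 => l _; apply: sume_ge0 => x _; exact: Jterm_ge0.
Qed.

Lemma Jobj_le0_rev_tok br n tg d : grid n tg -> bridge_simplex br -> predictor d ->
  (Jobj p0 alpha pi br n tg d <= 0)%E ->
  forall i, (1 <= i <= n)%N -> forall x l, 0 < marg p0 alpha pi (tg i) x ->
  rev_tok p0 alpha pi (tg i.-1) (tg i) l x
  =1 br l (tg i.-1) (tg i) (d x (tg i) l) (x l).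
Proof.
move=> hg hbr hd hJ i hi x l hm.
have [s0 st t1] := grid_step hg hi.
set J := fun j l' x' => Jterm br d (tg j.-1) (tg j) l' x'.
have Jge0 j l' x' : (1 <= j <= n)%N -> (0 <= J j l' x')%E.
  by move=> hj; have [? ? ?] := grid_step hg hj; exact: Jterm_ge0.
have hJx : (J i l x <= \sum_x' J i l x')%E.
  by apply: lee_sum_term; rewrite ?index_enum_uniq ?mem_index_enum // => x' _; exact: Jge0.
have hJl : (\sum_x' J i l x' <= \sum_l' \sum_x' J i l' x')%E.
  apply: lee_sum_term; rewrite ?index_enum_uniq ?mem_index_enum // => l' _.
  by apply: sume_ge0 => x' _; exact: Jge0.
have hJi : (\sum_l' \sum_x' J i l' x'
            <= \sum_(1 <= j < n.+1) \sum_l' \sum_x' J j l' x')%E.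
  apply: lee_sum_term; rewrite ?iota_uniq ?mem_index_iota // => j.
  rewrite mem_index_iota => hj.
  by apply: sume_ge0 => l' _; apply: sume_ge0 => x' _; exact: Jge0.
have hJ0 : (J i l x <= 0)%E.
  by rewrite (le_trans hJx (le_trans hJl (le_trans hJi _))) // -JobjE.
have hKL : (KL (rev_tok p0 alpha pi (tg i.-1) (tg i) l x)
               (br l (tg i.-1) (tg i) (d x (tg i) l) (x l)) <= 0)%E.
  by rewrite leNgt; apply: contraTN hJ0 => hKL; rewrite -ltNge mule_gt0.
apply: KL_le0_eq hKL; first exact: simplex_rev_tok.
by apply: hbr => //; apply: hd; rewrite ?(le_trans s0 (ltW st)).
Qed.

End ReverseProcess.

Lemma mobius_inj (F : fieldType) (a b c e u v : F) :
  a * e - b * c != 0 -> c * u + e != 0 -> c * v + e != 0 ->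
  (a * u + b) / (c * u + e) = (a * v + b) / (c * v + e) -> u = v.
Proof.
move=> hdet hu hv /eqP; rewrite eqr_div // => /eqP huv.
have : (a * e - b * c) * (u - v) = 0.
  by rewrite -(subrr ((a * v + b) * (c * u + e))) -{1}huv; ring.
by move/eqP; rewrite mulf_eq0 (negbTE hdet) subr_eq0 => /eqP.
Qed.

Section UniformBridge.
Variables (R : realType) (K L : nat) (alpha : R -> R).
Hypothesis hK : (1 < K)%N.

Let K_gt0 : (0 : R) < K%:R. Proof. by rewrite ltr0n ltnW. Qed.

Lemma simplex_unif : simplex (fun _ : 'I_K => (K%:R : R)^-1).
Proof.
split=> [_|]; first by rewrite invr_ge0 ltW.
by rewrite sumr_const card_ord -[_ *+ K]mulr_natl mulfV ?gt_eqF.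
Qed.

Lemma qcat_unif_gt0 (a : R) (nu : 'I_K -> R) k : 0 <= a < 1 -> simplex nu ->
  0 < qcat (fun _ : 'I_K => K%:R^-1) a nu k.
Proof.
move=> /andP[a0 a1] [hn _]; rewrite /qcat ltr_wpDl ?mulr_ge0 //.
by rewrite mulr_gt0 ?subr_gt0 ?invr_gt0.
Qed.

Lemma udm_bridge_bayes l s t nu k : 0 < alpha s -> 0 < alpha t < 1 -> simplex nu ->
  @udm_bridge R K L alpha l s t nu k
  =1 bayes_bridge (fun _ => K%:R^-1) (alpha t) (alpha s) nu k.
Proof.
move=> as0 /andP[at0 at1] hnu x.
have hq : 0 < qcat (fun _ => K%:R^-1) (alpha t) nu k by rewrite qcat_unif_gt0 // ltW.
rewrite /qcat in hq.
have hden : alpha t * nu k * K%:R + (1 - alpha t) != 0.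
  have -> : alpha t * nu k * K%:R + (1 - alpha t)
            = K%:R * (alpha t * nu k + (1 - alpha t) / K%:R) by field; rewrite gt_eqF.
  by rewrite mulf_neq0 ?gt_eqF.
rewrite /udm_bridge /bayes_bridge /qcat /onehot [(k == x)]eq_sym.
by have [->|hxk] := eqVneq x k; rewrite ?eqxx ?(negbTE hxk) /=; field; rewrite hden !gt_eqF.
Qed.

Lemma udm_bridge_inj l s t k nu1 nu2 :
  0 < alpha t < 1 -> alpha t < alpha s -> alpha s <= 1 -> simplex nu1 -> simplex nu2 ->
  @udm_bridge R K L alpha l s t nu1 k =1 @udm_bridge R K L alpha l s t nu2 k ->
  nu1 =1 nu2.
Proof.
move=> /andP[at0 at1] ats as1 [hn1 _] [hn2 _] h.
have as0 : 0 < alpha s := lt_trans at0 ats.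
have hden nu : (forall x, 0 <= nu x) -> K%:R * alpha t * nu k + (1 - alpha t) != 0.
  by move=> hn; rewrite gt_eqF // ltr_wpDl ?subr_gt0 // !mulr_ge0 // ltW.
set r := alpha t / alpha s; set D := (1 - r) * (1 - alpha s).
have udm_at_k nu : @udm_bridge R K L alpha l s t nu k k =
    ((K%:R * alpha t + alpha s - alpha t) * nu k + (r - alpha t + D / K%:R))
    / (K%:R * alpha t * nu k + (1 - alpha t)).
  by rewrite /udm_bridge /= eqxx /= -/r -/D; congr (_ / _); ring.
have udm_off_k nu x : x != k -> @udm_bridge R K L alpha l s t nu k x =
    ((alpha s - alpha t) * nu x + D / K%:R) / (K%:R * alpha t * nu k + (1 - alpha t)).
  by move=> /negbTE hx; rewrite /udm_bridge /= hx /= -/r -/D; congr (_ / _); ring.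
have ek : nu1 k = nu2 k.
  apply: (@mobius_inj _ (K%:R * alpha t + alpha s - alpha t) (r - alpha t + D / K%:R)
            (K%:R * alpha t) (1 - alpha t)) (hden _ hn1) (hden _ hn2) _.
    2: by rewrite -!udm_at_k h.
  (* the determinant of this Moebius map is positive *)
  rewrite gt_eqF // (_ : _ - _ = alpha t * (1 - r) * (K%:R - 1 + alpha s)
                                + (alpha s - alpha t) * (1 - alpha t)); last first.
    by rewrite /D /r; field; rewrite !gt_eqF.
  have r1 : r < 1 by rewrite ltr_pdivrMr // mul1r.
  have K1 : 1 <= K%:R - 1 :> R by rewrite lerBrDr (ler_nat _ 2).
  by rewrite ltr_wpDl ?mulr_gt0 ?subr_gt0 // mulr_ge0 ?mulr_ge0 ?ltW ?subr_gt0 //; lra.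
move=> x; have [->//|hx] := eqVneq x k.
move: (h x); rewrite !udm_off_k // ek => /eqP; rewrite eqr_div ?hden //.
move=> /eqP /(mulIf (hden _ hn2)) /addIr /mulfI; apply.
by rewrite subr_eq0 gt_eqF.
Qed.

End UniformBridge.

Section UniformSchedule.
Variables (R : realType) (K L : nat) (alpha : R -> R).
Hypotheses (hK : (1 < K)%N) (halpha : schedule alpha)
  (hdecr : forall s t, 0 <= s -> s < t -> t <= 1 -> alpha t < alpha s)
  (hrange : forall t, 0 < t -> t <= 1 -> 0 < alpha t < 1).

Lemma schedule_step_bounds s t : 0 <= s -> s < t -> t <= 1 ->
  [/\ 0 < alpha t < 1, alpha t < alpha s & 0 < alpha s <= 1].
Proof.
move=> s0 st t1; have hat := hrange (le_lt_trans s0 st) t1.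
have ats := hdecr s0 st t1.
split=> //; case/andP: hat => at0 _; rewrite (lt_trans at0 ats) /=.
by have /andP[] := halpha.2.1 s s0 (le_trans (ltW st) t1).
Qed.

Lemma simplex_udm_bridge : bridge_simplex (@udm_bridge R K L alpha).
Proof.
move=> l s t nu k s0 st t1 hnu.
have [hat _ /andP[as0 as1]] := schedule_step_bounds s0 st t1.
apply: eq_simplex (udm_bridge_bayes hK l k as0 hat hnu) _.
have [hr hst] := schedule_ratio halpha s0 (ltW st) t1.
apply: simplex_bayes_bridge hr hst _ => //; first exact: simplex_unif.
  by rewrite (ltW as0).
by case/andP: hat => at0 at1; rewrite qcat_unif_gt0 // (ltW at0).
Qed.

Lemma udm_A1 pi : (forall l k, pi l k = K%:R^-1) -> A1 alpha pi (@udm_bridge R K L alpha).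
Proof.
move=> hunif l s t s0 st t1 xs xt nu hnu _.
have [hat _ /andP[as0 _]] := schedule_step_bounds s0 st t1.
by rewrite udm_bridge_bayes // /bayes_bridge /qcat !hunif.
Qed.

Lemma udm_bridge_injective s t l k nu1 nu2 : 0 <= s -> s < t -> t <= 1 ->
  simplex nu1 -> simplex nu2 ->
  @udm_bridge R K L alpha l s t nu1 k =1 @udm_bridge R K L alpha l s t nu2 k ->
  nu1 =1 nu2.
Proof.
move=> s0 st t1; have [hat ats /andP[_ as1]] := schedule_step_bounds s0 st t1.
exact: udm_bridge_inj.
Qed.

Lemma udm_bridge_rev_tok_xhat p0 pi s t l xt nu : is_pmf p0 ->
  (forall l, simplex (pi l)) -> (forall l k, pi l k = K%:R^-1) ->
  0 <= s -> s < t -> t <= 1 -> 0 < marg p0 alpha pi t xt -> simplex nu ->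
  @udm_bridge R K L alpha l s t nu (xt l) =1 rev_tok p0 alpha pi s t l xt ->
  nu =1 xhat p0 alpha pi xt t l.
Proof.
move=> hp0 hpi hunif s0 st t1 hm hnu heq; have t0 := le_trans s0 (ltW st).
have hpost := A1_bridge_posterior hp0 halpha hpi (udm_A1 hunif).
apply: (@udm_bridge_injective s t l (xt l) nu _ s0 st t1 hnu
         (simplex_xhat hp0 halpha hpi l t0 t1 hm)) => y.
by rewrite heq (hpost _ _ s0 st t1 l xt hm).
Qed.

End UniformSchedule.

Unset Implicit Arguments. Set Strict Implicit.

Theorem proposition1 (R : realType) (K L : nat) (hK : (2 <= K)%N) (hL : (1 <= L)%N)
  (p0 : seqX K L -> R) (hp0 : is_pmf p0)
  (alpha : R -> R) (halpha : schedule alpha)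
  (pi : 'I_L -> 'I_K -> R) (hpi : forall l, simplex (pi l)) :
  (* (i) and (ii), for any bridge extension satisfying (A1) *)
  (forall br : bridge_type R K L, bridge_simplex br -> A1 alpha pi br ->
     (forall s t : R, 0 <= s -> s < t -> t <= 1 ->
      forall (l : 'I_L) (xt : seqX K L), 0 < marg p0 alpha pi t xt ->
        rev_tok p0 alpha pi s t l xt =1 br l s t (xhat p0 alpha pi xt t l) (xt l))
     /\
     (forall (n : nat) (tg : nat -> R), grid n tg ->
      forall d, predictor d ->
        (Jobj p0 alpha pi br n tg (xhat p0 alpha pi) <= Jobj p0 alpha pi br n tg d)%E))
  /\
  (* (iii) uniqueness in the UDM case with the canonical extension *)
  ((forall s t, 0 <= s -> s < t -> t <= 1 -> alpha t < alpha s) ->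
   (forall t, 0 < t -> t <= 1 -> 0 < alpha t < 1) ->
   (forall l k, pi l k = K%:R^-1) ->
     (forall s t : R, 0 < s -> s < t -> t <= 1 ->
      forall (l : 'I_L) (k : 'I_K) (nu1 nu2 : 'I_K -> R), simplex nu1 -> simplex nu2 ->
        @udm_bridge R K L alpha l s t nu1 k =1 @udm_bridge R K L alpha l s t nu2 k ->
        nu1 =1 nu2)
     /\
     (forall s t : R, 0 < s -> s < t -> t <= 1 ->
      forall (l : 'I_L) (xt : seqX K L) (nu : 'I_K -> R),
        0 < marg p0 alpha pi t xt -> simplex nu ->
        @udm_bridge R K L alpha l s t nu (xt l) =1 rev_tok p0 alpha pi s t l xt ->
        nu =1 xhat p0 alpha pi xt t l)
     /\
     (forall (n : nat) (tg : nat -> R), grid n tg ->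
      forall d, predictor d ->
        (Jobj p0 alpha pi (@udm_bridge R K L alpha) n tg d
           <= Jobj p0 alpha pi (@udm_bridge R K L alpha) n tg (xhat p0 alpha pi))%E ->
        forall i, (1 <= i <= n)%N -> 0 < tg i.-1 ->
        forall (x : seqX K L) (l : 'I_L), 0 < marg p0 alpha pi (tg i) x ->
          d x (tg i) l =1 xhat p0 alpha pi x (tg i) l)).
Proof.
split=> [br hbr /(A1_bridge_posterior hp0 halpha hpi) hpost|hdecr hrange hunif].
  split=> // n tg hg d hd.
  by rewrite (Jobj_xhat hp0 halpha hpi hg hpost) (Jobj_ge0 hp0 halpha hpi hg hbr hd).
have hpost := A1_bridge_posterior hp0 halpha hpi (udm_A1 hK halpha hdecr hrange hunif).
have hsimp := @simplex_udm_bridge R K L alpha hK halpha hdecr hrange.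
have hid s t l xt nu := @udm_bridge_rev_tok_xhat R K L alpha hK halpha hdecr hrange
  p0 pi s t l xt nu hp0 hpi hunif.
split=> [s t s0 st t1 l k nu1 nu2|].
  exact: (@udm_bridge_injective R K L alpha hK halpha hdecr hrange s t l k nu1 nu2 (ltW s0)).
split=> [s t s0 st t1 l xt nu|n tg hg d hd hJ i hi si x l hm].
  exact: hid s t l xt nu (ltW s0) st t1.
rewrite (Jobj_xhat hp0 halpha hpi hg hpost) in hJ.
have [s0 st t1] := grid_step hg hi.
have hdx : simplex (d x (tg i) l) by apply: hd => //; exact: le_trans s0 (ltW st).
apply: (hid _ _ l x _ (ltW si) st t1 hm hdx) => y.
by rewrite (Jobj_le0_rev_tok hp0 halpha hpi hg hsimp hd hJ hi l hm).
Qed.
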